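(* Let $\mathcal{T}$ be a tiling of $\mathbb{R}^d$ with finite local complexity, and let $f:X_{\mathcal{T}}\to\mathbb{T}$ be a continuous eigenfunction. Then for every $\varepsilon>0$ there is $R>0$ such that whenever $\mathcal{S}_1,\mathcal{S}_2\in X_{\mathcal{T}}$, $x\in\mathbb{R}^d$ and $\mathcal{S}_1\wedge B(x,R)=\mathcal{S}_2\wedge B(x,R)$, we have $|f(\mathcal{S}_1)-f(\mathcal{S}_2)|<\varepsilon$. Consequently, given $f$ and $\varepsilon>0$, if $R>0$ is large enough and a patch $\mathcal{P}$ has support containing a ball of radius $R$, then the diameter of $f(A_{\mathcal{P}})$ is less than $\varepsilon$, where $A_{\mathcal{P}}=\{\mathcal{S}\in X_{\mathcal{T}}:\mathcal{P}\subset\mathcal{S}\}$.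
   Context: A tile in $\mathbb{R}^d$ is a compact set equal to the closure of its interior, possibly labeled from a finite set. Patches: sets of tiles with pairwise disjoint interiors; tilings: patches whose support (closure of union of supports) is $\mathbb{R}^d$. For a patch $\mathcal{P}$ and $S\subset\mathbb{R}^d$: $\mathcal{P}\sqcap S=\{T\in\mathcal{P}:\operatorname{supp}T\cap S\neq\emptyset\}$ and $\mathcal{P}\wedge S=\{T\in\mathcal{P}:\operatorname{supp}T\subset S\}$. $B(x,R)$ is the closed ball; $B_r=B(0,r)$; $\mathbb{T}=\{z\in\mathbb{C}:|z|=1\}$. Finite local complexity: for each compact $K$, $\{\mathcal{T}\sqcap(K+x)\}_x$ is finite up to translation. The hull $X_{\mathcal{T}}$ is the closure of $\{\mathcal{T}+x\}$ under the metric $\rho(\mathcal{P}_1,\mathcal{P}_2)=\inf$ of $\varepsilon\in(0,1/\sqrt2)$ such that there are $\|x_i\|\le\varepsilon$ with $(\mathcal{P}_1+x_1)\sqcap B_{1/\varepsilon}=(\mathcal{P}_2+x_2)\sqcap B_{1/\varepsilon}$ (or $1/\sqrt2$ if none). A continuous eigenfunction (with eigenvalue $a\in\mathbb{R}^d$) is a continuous map $f:X_{\mathcal{T}}\to\mathbb{T}$ with $f(\mathcal{S}-x)=e^{2\pi i\langle x,a\rangle}f(\mathcal{S})$ for all $\mathcal{S}\in X_{\mathcal{T}}$ and $x\in\mathbb{R}^d$. *)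

(* R : realType, points of R^d are row vectors 'rV[R]_d
   (with the product topology, which is the Euclidean topology), the circle group
   lives in the complex numbers R[i] of mathcomp-real-closed. *)
From HB Require Import structures.
From mathcomp Require Import all_boot all_order all_algebra.
From mathcomp Require Import all_classical all_reals all_analysis.
From mathcomp Require Import complex.
Set Implicit Arguments.
Unset Strict Implicit.
Unset Printing Implicit Defensive.
Import Order.TTheory GRing.Theory Num.Theory.
Import numFieldTopology.Exports numFieldNormedType.Exports.
Local Open Scope ring_scope.
Local Open Scope classical_set_scope.
Local Open Scope complex_scope.

Section Tilings.
Context {R : realType} {d : nat} {L : finType}.

Definition enorm (x : 'rV[R]_d) : R := Num.sqrt (\sum_(i < d) (x ord0 i) ^+ 2).
Definition eball (x : 'rV[R]_d) (r : R) : set 'rV[R]_d :=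
  [set y | enorm (y - x) <= r].
Definition dotp (x a : 'rV[R]_d) : R := \sum_(i < d) x ord0 i * a ord0 i.

Definition set_tr (A : set 'rV[R]_d) (x : 'rV[R]_d) : set 'rV[R]_d :=
  [set y + x | y in A].

Definition Tile := (set 'rV[R]_d * L)%type.
Definition supp (t : Tile) : set 'rV[R]_d := t.1.
Definition is_tile (t : Tile) : Prop :=
  compact (supp t) /\ closure (interior (supp t)) = supp t.

Definition Patch := set Tile.
Definition is_patch (P : Patch) : Prop :=
  (forall t, P t -> is_tile t) /\
  (forall t1 t2, P t1 -> P t2 -> t1 <> t2 ->
     interior (supp t1) `&` interior (supp t2) = set0).
Definition patch_supp (P : Patch) : set 'rV[R]_d :=
  closure (\bigcup_(t in P) supp t).
Definition is_tiling (P : Patch) : Prop := is_patch P /\ patch_supp P = setT.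

Definition tile_tr (t : Tile) (x : 'rV[R]_d) : Tile := (set_tr (supp t) x, t.2).
Definition patch_tr (P : Patch) (x : 'rV[R]_d) : Patch := [set tile_tr t x | t in P].

(* P ⊓ S  and  P ∧ S *)
Definition meet_patch (P : Patch) (S : set 'rV[R]_d) : Patch :=
  [set t | P t /\ supp t `&` S !=set0].
Definition inside_patch (P : Patch) (S : set 'rV[R]_d) : Patch :=
  [set t | P t /\ supp t `<=` S].

Definition FLC (T : Patch) : Prop :=
  forall K : set 'rV[R]_d, compact K ->
    exists (n : nat) (Ps : 'I_n -> Patch),
      forall x : 'rV[R]_d, exists (i : 'I_n) (y : 'rV[R]_d),
        meet_patch T (set_tr K x) = patch_tr (Ps i) y.

Definition rho_set (P1 P2 : Patch) : set R :=
  [set e : R | (0 < e /\ e < (Num.sqrt 2)^-1) /\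
     exists x1 x2 : 'rV[R]_d, enorm x1 <= e /\ enorm x2 <= e /\
       meet_patch (patch_tr P1 x1) (eball 0 e^-1) =
       meet_patch (patch_tr P2 x2) (eball 0 e^-1)].
Definition rho (P1 P2 : Patch) : R :=
  if pselect (rho_set P1 P2 !=set0) then inf (rho_set P1 P2)
  else (Num.sqrt 2)^-1.

Definition hull (T : Patch) : set Patch :=
  [set S | forall e : R, 0 < e -> exists x : 'rV[R]_d, rho S (patch_tr T x) < e].

Definition A_patch (T P : Patch) : set Patch := [set S | hull T S /\ P `<=` S].

Definition expi (t : R) : R[i] := cos (2 * pi * t) +i* sin (2 * pi * t).

Definition continuous_on_hull (T : Patch) (f : Patch -> R[i]) : Prop :=
  forall S, hull T S -> forall e : R, 0 < e ->
    exists2 del : R, 0 < del &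
      forall S', hull T S' -> rho S S' < del -> `|f S - f S'| < e%:C.
Definition is_eigenfunction (T : Patch) (f : Patch -> R[i]) (a : 'rV[R]_d) : Prop :=
  [/\ continuous_on_hull T f,
      (forall S, hull T S -> `|f S| = 1) &
      (forall S (x : 'rV[R]_d), hull T S ->
         f (patch_tr S (- x)) = expi (dotp x a) * f S)].

End Tilings.

From HB Require Import structures.
From mathcomp Require Import all_boot all_order all_algebra.
From mathcomp Require Import all_classical all_reals all_analysis.
From mathcomp Require Import complex.
From mathcomp Require Import ring lra.
Import Order.TTheory GRing.Theory Num.Theory.
Import numFieldTopology.Exports numFieldNormedType.Exports.
Local Open Scope ring_scope.
Local Open Scope classical_set_scope.
Local Open Scope complex_scope.

(* If the first claim failed, there would be translates T + y1_n and T + y2_n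
   agreeing on B(0, n) whose f-values stay eps apart (the eigenvalue equation
   lets us recentre the balls at the origin without changing |f - f|).  FLC
   makes the hull sequentially compact: anchoring one tile near the origin, the
   patterns of T + y1_n on growing cubes become constant along an ultrafilter,
   and their union is a limit point S of the hull; continuity of f at S brings
   both values within eps/2 of f S.  Tilings S1, S2 of the hull are handled
   through orbit points agreeing with them on a large ball.  Since FLC bounds
   the diameter of tiles, agreement of S1 and S2 on the tiles inside B(x, r)
   implies agreement on the tiles meeting a smaller ball; for the second claim,
   a tile of S1 inside B(x, r), which lies in supp P, shares interior points
   with a tile of P, hence is that tile and belongs to S2 as well. *)

Section Translation.
Context {R : realType} {d : nat} {L : finType}.
Local Notation V := 'rV[R]_d.
Local Notation Tl := (@Tile R d L).
Local Notation Pt := (@Patch R d L).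

Lemma set_trE (A : set V) z p : set_tr A z p <-> A (p - z).
Proof.
split; first by case=> y Ay <-; rewrite addrK.
by move=> Ap; exists (p - z) => //; rewrite subrK.
Qed.

Lemma set_tr0 (A : set V) : set_tr A 0 = A.
Proof. by apply/seteqP; split=> p; rewrite set_trE subr0. Qed.

Lemma set_trD (A : set V) a b : set_tr (set_tr A a) b = set_tr A (a + b).
Proof. by apply/seteqP; split=> p; rewrite !set_trE opprD addrA addrAC. Qed.

Lemma eball_tr (x : V) r z : set_tr (eball x r) z = eball (x + z) r.
Proof.
by apply/seteqP; split=> p; rewrite set_trE /eball /= opprD addrA addrAC.
Qed.

Lemma tile_tr0 (t : Tl) : tile_tr t 0 = t.
Proof. by case: t => A l; rewrite /tile_tr /= set_tr0. Qed.

Lemma tile_trD (t : Tl) a b : tile_tr (tile_tr t a) b = tile_tr t (a + b).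
Proof. by case: t => A l; rewrite /tile_tr /= set_trD. Qed.

Lemma patch_trE (P : Pt) z t : patch_tr P z t <-> P (tile_tr t (- z)).
Proof.
split; first by case=> s Ps <-; rewrite tile_trD subrr tile_tr0.
by move=> Pt; exists (tile_tr t (- z)) => //; rewrite tile_trD addNr tile_tr0.
Qed.

Lemma patch_trP (P : Pt) z t :
  patch_tr P z t -> exists2 s, P s & t = tile_tr s z.
Proof. by case=> s Ps <-; exists s. Qed.

Lemma patch_tr0 (P : Pt) : patch_tr P 0 = P.
Proof. by apply/seteqP; split=> t; rewrite patch_trE oppr0 tile_tr0. Qed.

Lemma patch_trD (P : Pt) a b : patch_tr (patch_tr P a) b = patch_tr P (a + b).
Proof.
by apply/seteqP; split=> t; rewrite !patch_trE tile_trD opprD addrC.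
Qed.

Lemma meet_patch_tr (P : Pt) z (B : set V) :
  meet_patch (patch_tr P z) B = patch_tr (meet_patch P (set_tr B (- z))) z.
Proof.
apply/seteqP; split=> t.
  case=> /patch_trE Pt [p [tp Bp]]; apply/patch_trE; split=> //.
  by exists (p - z); split; rewrite /= set_trE opprK subrK.
move/patch_trE => -[Pt [p []]]; rewrite /= !set_trE opprK => tp Bp.
by split; [exact/patch_trE | exists (p + z)].
Qed.

Lemma meet_patch_tr_set_tr (P : Pt) z (B : set V) :
  meet_patch (patch_tr P z) (set_tr B z) = patch_tr (meet_patch P B) z.
Proof. by rewrite meet_patch_tr set_trD subrr set_tr0. Qed.

Lemma meet_patch_tr_eq (P Q : Pt) z (B : set V) :
  meet_patch P B = meet_patch Q B ->
  meet_patch (patch_tr P z) (set_tr B z) = meet_patch (patch_tr Q z) (set_tr B z).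
Proof. by rewrite !meet_patch_tr_set_tr => ->. Qed.

Lemma meet_patchS (P : Pt) (B C : set V) : B `<=` C ->
  meet_patch (meet_patch P C) B = meet_patch P B.
Proof.
move=> BC; apply/seteqP; split=> t; first by case=> -[].
case=> Pt [p [tp Bp]]; split; last by exists p.
by split=> //; exists p; split=> //; apply: BC.
Qed.

Lemma meet_patch_eqS (P Q : Pt) (B C : set V) : B `<=` C ->
  meet_patch P C = meet_patch Q C -> meet_patch P B = meet_patch Q B.
Proof. by move=> BC E; rewrite -(meet_patchS P _ _ BC) -(meet_patchS Q _ _ BC) E. Qed.

End Translation.

Section Coordinates.
Context {R : realType} {d : nat}.
Local Notation V := 'rV[R]_d.

Definition cube (k : R) : set V := [set v | forall i, `|v ord0 i| <= k].

Lemma cube_compact k : compact (cube k).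
Proof.
have -> : cube k = [set v : V | forall i, `[(- k), k]%classic (v ord0 i)].
  by apply/seteqP; split=> v /= H i; have := H i; rewrite /= in_itv /= ler_norml.
by apply: (@rV_compact _ _ (fun=> `[(- k), k]%classic)) => _; exact: segment_compact.
Qed.

Lemma cubeS (a b : R) : a <= b -> cube a `<=` cube b.
Proof. by move=> ab p H i; apply: le_trans (H i) ab. Qed.

Lemma cubeD (a b : R) (x y : V) : cube a x -> cube b y -> cube (a + b) (x + y).
Proof. by move=> Hx Hy i; rewrite mxE; apply: le_trans (ler_normD _ _) (lerD (Hx i) (Hy i)). Qed.

Lemma cubeN (a : R) (x : V) : cube a x -> cube a (- x).
Proof. by move=> Hx i; rewrite mxE normrN. Qed.

Lemma cube_mx_norm (v : V) : cube `|v| v.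
Proof.
move=> i.
have /mapP[j Hj ->] : `|v ord0 i| \in [seq `|v x.1 x.2| | x : 'I_1 * 'I_d].
  by apply/mapP; exists (ord0, i) => //=; rewrite mem_enum.
by rewrite [leRHS]/Num.norm /= mx_normrE; apply/bigmax_geP; right; exists j.
Qed.

Lemma compact_sub_cube (A : set V) : compact A -> exists M, 0 <= M /\ A `<=` cube M.
Proof.
move=> /compact_bounded [M [Mreal HM]].
exists (`|M| + 1); split; first by rewrite addr_ge0.
move=> p Ap i; apply: le_trans (cube_mx_norm p i) _.
by apply: HM => //; apply: le_lt_trans (real_ler_norm Mreal) _; rewrite ltrDl.
Qed.

Lemma enorm_ge0 (v : V) : 0 <= enorm v.
Proof. exact: sqrtr_ge0. Qed.

Lemma enorm0 : enorm (0 : V) = 0.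
Proof. by rewrite /enorm big1 ?sqrtr0 // => i _; rewrite mxE expr0n. Qed.

Lemma enormN (v : V) : enorm (- v) = enorm v.
Proof. by rewrite /enorm; congr Num.sqrt; apply: eq_bigr => i _; rewrite mxE sqrrN. Qed.

Lemma coord_le_enorm (v : V) i : `|v ord0 i| <= enorm v.
Proof.
rewrite /enorm -sqrtr_sqr; apply: ler_wsqrtr.
by rewrite (bigD1 i) //= lerDl; apply: sumr_ge0 => j _; exact: sqr_ge0.
Qed.

Lemma enorm_le_coord (v : V) (c : R) : 0 <= c ->
  (forall i, `|v ord0 i| <= c) -> enorm v <= d%:R * c.
Proof.
move=> c0 H; rewrite /enorm -(ger0_norm (mulr_ge0 (ler0n _ d) c0)) -sqrtr_sqr.
apply: ler_wsqrtr; apply: le_trans (_ : \sum_(i < d) c ^+ 2 <= _).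
  apply: ler_sum => i _; rewrite -real_normK ?num_real //.
  by apply: lerXn2r; rewrite ?nnegrE // normr_ge0.
rewrite sumr_const card_ord exprMn -[_ *+ d]mulr_natl ler_wpM2r ?sqr_ge0 //.
by rewrite -natrX ler_nat; case: (d) => [|n] //; rewrite expnS expn1 leq_pmulr.
Qed.

Lemma eball_coord (x : V) r (p : V) :
  eball x r p -> forall i, `|p ord0 i - x ord0 i| <= r.
Proof.
by move=> H i; apply: le_trans H; have := coord_le_enorm (p - x) i; rewrite !mxE.
Qed.

Lemma coord_eball (x : V) r (p : V) (c : R) : 0 <= c -> d%:R * c <= r ->
  (forall i, `|p ord0 i - x ord0 i| <= c) -> eball x r p.
Proof.
by move=> c0 cr H; apply: le_trans cr; apply: enorm_le_coord => // i; rewrite !mxE.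
Qed.

Lemma eball_sub (x y : V) r : 0 <= r ->
  eball x r `<=` eball y (d%:R * (r + enorm (x - y))).
Proof.
move=> r0 p Hp; apply: (coord_eball y _ p (r + enorm (x - y))) => //.
  by rewrite addr_ge0 ?enorm_ge0.
move=> i; have -> : p ord0 i - y ord0 i = (p ord0 i - x ord0 i) + (x - y) ord0 i.
  by rewrite !mxE; ring.
apply: le_trans (ler_normD _ _) _.
by apply: lerD; [exact: eball_coord | exact: coord_le_enorm].
Qed.

Lemma set_tr_inj (A : set V) (M : R) a b : A `<=` cube M -> A !=set0 ->
  set_tr A a = set_tr A b -> a = b.
Proof.
move=> HM [p Ap] E; set w := b - a.
have step q : A q -> A (q + w).
  move=> Aq; have : set_tr A b (q + b) by apply/set_trE; rewrite addrK.
  by rewrite -E set_trE /w addrA.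
have iter m : A (p + w *+ m).
  by elim: m => [|m IH]; rewrite ?mulr0n ?addr0 // mulrSr addrA; apply: step.
suff : w = 0 by move/eqP; rewrite subr_eq0 => /eqP.
apply/matrixP => i0 i; rewrite (ord1 i0) [RHS]mxE; apply: contrapT => ne.
have wi : 0 < `|w ord0 i| by rewrite normr_gt0; apply/eqP.
have M0 : 0 <= M by apply: le_trans (HM _ Ap i).
set m := Num.Def.archi_bound ((M + M) / `|w ord0 i|).
have := archi_boundP (divr_ge0 (addr_ge0 M0 M0) (ltW wi)).
rewrite ltr_pdivrMr // => hm.
have mxMn k : (w *+ k) ord0 i = w ord0 i *+ k.
  elim: k => [|k IH]; first by rewrite !mulr0n mxE.
  by rewrite !mulrS mxE IH.
have hpm : `|p ord0 i + w ord0 i *+ m| <= M.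
  by have := HM _ (iter m) i; rewrite mxE mxMn.
have : `|w ord0 i *+ m| <= M + M.
  rewrite -(addKr (p ord0 i) (w ord0 i *+ m)).
  apply: le_trans (ler_normD _ _) _; rewrite normrN addrC.
  by apply: lerD => //; exact: HM.
by rewrite normrMn -mulr_natr => /le_lt_trans/(_ hm); rewrite mulrC ltxx.
Qed.

Lemma ballE (x y : V) e :
  ball x e y <-> 0 < e /\ forall i, `|x ord0 i - y ord0 i| < e.
Proof.
split; first by case=> e0 H; split=> // i; exact: (H ord0 i).
by case=> e0 H; split=> // i j; rewrite (ord1 i); exact: H.
Qed.

Lemma nbhs_coordP (p : V) (A : set V) :
  nbhs p A <-> exists2 e : R, 0 < e &
    forall q : V, (forall i, `|p ord0 i - q ord0 i| < e) -> A q.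
Proof.
split; first by case/nbhs_ballP=> e e0 H; exists e => // q Hq; apply/H/ballE.
by case=> e e0 H; apply/nbhs_ballP; exists e => // q /ballE [_ Hq]; exact: H.
Qed.

Lemma interior_set_tr (A : set V) z p :
  interior (set_tr A z) p <-> interior A (p - z).
Proof.
rewrite /interior /=; split=> /nbhs_coordP [e e0 H]; apply/nbhs_coordP;
  exists e => // q Hq.
  have := H (q + z); rewrite set_trE addrK; apply=> i.
  by have := Hq i; rewrite !mxE opprD addrA addrAC.
apply/set_trE; apply: H => i; have := Hq i.
by rewrite !mxE opprD addrA addrAC opprK subrK.
Qed.

Lemma interior_cube (A : set V) c : interior A c ->
  exists2 e : R, 0 < e & forall w : V, (forall i, `|w ord0 i| < e) -> A (c + w).
Proof.
rewrite /interior /= => /nbhs_coordP [e e0 H]; exists e => // w Hw.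
by apply: H => i; rewrite mxE opprD addNKr normrN.
Qed.

End Coordinates.

Section Tiles.
Context {R : realType} {d : nat} {L : finType}.
Local Notation V := 'rV[R]_d.
Local Notation Tl := (@Tile R d L).
Local Notation Pt := (@Patch R d L).

Definition coord_diam_le (A : set V) (D : R) :=
  forall p q, A p -> A q -> forall i, `|p ord0 i - q ord0 i| <= D.

Lemma coord_diam_le_set_tr (A : set V) z D :
  coord_diam_le (set_tr A z) D <-> coord_diam_le A D.
Proof.
have E (p q : V) i : (p + z) ord0 i - (q + z) ord0 i = p ord0 i - q ord0 i.
  by rewrite !mxE opprD addrACA subrr addr0.
split=> H p q Ap Aq i.
  by rewrite -E; apply: H; apply/set_trE; rewrite addrK.
move/set_trE: Ap; move/set_trE: Aq => Aq Ap.
by rewrite -[p](subrK z) -[q](subrK z) E; exact: H.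
Qed.

Lemma compact_coord_diam (A : set V) : compact A ->
  exists D, 0 <= D /\ coord_diam_le A D.
Proof.
move=> /compact_sub_cube [M [M0 HM]]; exists (M + M).
split=> [|p q Ap Aq i]; first by rewrite addr_ge0.
exact: le_trans (ler_normB _ _) (lerD (HM _ Ap i) (HM _ Aq i)).
Qed.

Lemma coord_diam_le_sub_eball (A : set V) D (x : V) r : 0 <= D -> 0 <= r ->
  coord_diam_le A D -> A `&` eball x r !=set0 -> A `<=` eball x (d%:R * (r + D)).
Proof.
move=> D0 r0 HD [p [Ap Bp]] q Aq.
apply: (coord_eball x _ q (r + D)) => // [|i]; first by rewrite addr_ge0.
have -> : q ord0 i - x ord0 i = (p ord0 i - x ord0 i) + (q ord0 i - p ord0 i).
  by ring.
by apply: le_trans (ler_normD _ _) _; apply: lerD; [exact: eball_coord | exact: HD].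
Qed.

Lemma closure_interior_meet (A B : set V) p :
  closure (interior A) p -> interior B p -> interior A `&` interior B !=set0.
Proof. by move=> cA /nbhs_interior; apply: cA. Qed.

Lemma tile_interior (t : Tl) p : is_tile t -> supp t p -> exists c, interior (supp t) c.
Proof.
case=> _ ct tp; apply: contrapT => H.
have I0 : interior (supp t) = set0 by apply/seteqP; split=> // c ic; apply: H; exists c.
by move: tp; rewrite -ct I0 closure0.
Qed.

Lemma patch_supp_meet (P : Pt) p (B : set V) :
  patch_supp P p -> nbhs p B -> exists t, P t /\ supp t `&` B !=set0.
Proof. by move=> cP /cP [q [[t Pt tq] Bq]]; exists t; split=> //; exists q. Qed.

Lemma patch_tr_tile_interior (T : Pt) z t p : is_patch T -> patch_tr T z t ->
  supp t p -> exists c, interior (supp t) c.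
Proof.
move=> [tT _] /patch_trP [s Ts ->] /set_trE sp.
have [c ic] := tile_interior _ _ (tT _ Ts) sp.
by exists (c + z); apply/interior_set_tr; rewrite addrK.
Qed.

Lemma patch_tr_tile_eq (T : Pt) z t1 t2 : is_patch T ->
  patch_tr T z t1 -> patch_tr T z t2 ->
  interior (supp t1) `&` interior (supp t2) !=set0 -> t1 = t2.
Proof.
move=> [_ dT] /patch_trP [s1 T1 ->] /patch_trP [s2 T2 ->] [c [i1 i2]].
move/interior_set_tr: i1 => i1; move/interior_set_tr: i2 => i2.
case: (pselect (s1 = s2)) => [-> //|ne].
by have := dT _ _ T1 T2 ne; rewrite -subset0 => /(_ (c - z)) []; split.
Qed.

Lemma patch_tr_tile_tr_rigid (T : Pt) z t a e c M : is_patch T ->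
  supp t `<=` cube M -> interior (supp t) c -> interior (supp t) (c + e) ->
  patch_tr T z (tile_tr t a) -> patch_tr T z (tile_tr t (a + e)) -> e = 0.
Proof.
move=> pT HM ic ice Ta Tae.
have E : tile_tr t a = tile_tr t (a + e).
  apply: (patch_tr_tile_eq _ _ _ _ pT Ta Tae); exists (c + e + a).
  by split; apply/interior_set_tr; [rewrite addrK | rewrite opprD addrA !addrK].
have /eqP := set_tr_inj _ _ _ _ HM (ex_intro _ c (interior_subset ic)) (congr1 supp E).
by rewrite -subr_eq0 opprD addrA subrr sub0r oppr_eq0 => /eqP.
Qed.

Lemma meet_patch_interior (T : Pt) t c : is_patch T -> T t ->
  interior (supp t) c -> meet_patch T [set c] = [set t].
Proof.
move=> pT Tt ic; apply/seteqP; split=> t'; last first.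
  by move=> /= ->; split=> //; exists c; split=> //; exact: nbhs_singleton.
case=> Tt' [x [t'x /= xc]]; subst x; apply: contrapT => ne.
have ct' : closure (interior (supp t')) c by case: (pT.1 _ Tt') => _ ->.
have [w [w1 w2]] := closure_interior_meet _ _ _ ct' ic.
by have := pT.2 _ _ Tt Tt' (nesym ne); rewrite -subset0 => /(_ w) []; split.
Qed.

(* At an interior point c of a tile t, the pattern of T is the single tile t,
   so FLC for the compact set {0} leaves only finitely many tile shapes. *)
Lemma FLC_tile_diam (T : Pt) : is_patch T -> FLC T ->
  exists D, 0 <= D /\ forall t, T t -> coord_diam_le (supp t) D.
Proof.
move=> pT hF; have K0 : compact [set 0 : V] by exact: compact_set1.
have [n [Ps HPs]] := hF _ K0.
have HM i : exists M, 0 <= M /\ forall s y,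
    Ps i = [set s] -> T (tile_tr s y) -> coord_diam_le (supp s) M.
  case: (pselect (exists s y, Ps i = [set s] /\ T (tile_tr s y))); last first.
    by move=> N; exists 0; split=> // s y Es Ts; exfalso; apply: N; exists s, y.
  case=> s [y [Es Ts]]; have [M [M0 HM]] := compact_coord_diam _ (pT.1 _ Ts).1.
  exists M; split=> // s' y' Es'; have -> : s' = s by have : [set s] s' by rewrite -Es Es'.
  by move=> _; apply/(coord_diam_le_set_tr _ y).
have [M HM'] := choice HM.
exists (\sum_i M i); split=> [|t Tt p q tp tq j].
  by apply: sumr_ge0 => i _; case: (HM' i).
have [c ic] := tile_interior _ _ (pT.1 _ Tt) tp.
have [i [y]] := HPs c; rewrite (_ : set_tr _ c = [set c]); last first.
  by apply/seteqP; split=> x; rewrite set_trE /=; [move/subr0_eq | move->; rewrite subrr].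
rewrite (meet_patch_interior _ _ _ pT Tt ic) => Ey.
have Es : Ps i = [set tile_tr t (- y)].
  apply/seteqP; split=> s; last by move=> /= ->; apply/patch_trE; rewrite -Ey.
  move=> Pis; have : patch_tr (Ps i) y (tile_tr s y) by exists s.
  by rewrite -Ey /= => <-; rewrite tile_trD subrr tile_tr0.
have := (HM' i).2 _ y Es; rewrite tile_trD addNr tile_tr0 => /(_ Tt).
move=> /coord_diam_le_set_tr /(_ p q tp tq j) /le_trans; apply.
by rewrite (bigD1 i) //= lerDl; apply: sumr_ge0 => k _; case: (HM' k).
Qed.

End Tiles.

Section Hull.
Context {R : realType} {d : nat} {L : finType}.
Local Notation Pt := (@Patch R d L).

Lemma invr2_lt_inv_sqrt2 : (2 : R)^-1 < (Num.sqrt 2)^-1.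
Proof.
rewrite ltf_pV2 ?posrE ?sqrtr_gt0 //.
rewrite -{2}(ger0_norm (ler0n R 2)) -sqrtr_sqr ltr_sqrt ?exprn_gt0 //.
by rewrite expr2 ltr_pMl // ltr1n.
Qed.

Lemma rho_le (P1 P2 : Pt) e x1 x2 : 0 < e -> e <= 2^-1 ->
  enorm x1 <= e -> enorm x2 <= e ->
  meet_patch (patch_tr P1 x1) (eball 0 e^-1) =
  meet_patch (patch_tr P2 x2) (eball 0 e^-1) ->
  rho P1 P2 <= e.
Proof.
move=> e0 e2 h1 h2 E.
have Se : rho_set P1 P2 e.
  by split; [split=> //; exact: le_lt_trans e2 invr2_lt_inv_sqrt2 | exists x1, x2].
rewrite /rho; case: pselect => [ne|]; last by case; exists e.
by apply: ge_inf => //; exists 0 => y [[y0 _] _]; exact: ltW.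
Qed.

Lemma rho_le_tr (S P : Pt) x e : 0 < e -> e <= 2^-1 -> enorm x <= e ->
  meet_patch S (eball 0 e^-1) = meet_patch (patch_tr P x) (eball 0 e^-1) ->
  rho S P <= e.
Proof.
by move=> e0 e2 hx E; apply: (rho_le _ _ _ 0 x) => //; rewrite ?enorm0 ?ltW ?patch_tr0.
Qed.

Lemma rho_lt (P1 P2 : Pt) del : rho P1 P2 < del -> del <= (Num.sqrt 2)^-1 ->
  exists e x1 x2, [/\ 0 < e, e < del, enorm x1 <= e, enorm x2 <= e &
    meet_patch (patch_tr P1 x1) (eball 0 e^-1) =
    meet_patch (patch_tr P2 x2) (eball 0 e^-1)].
Proof.
move=> + hdel; rewrite /rho; destruct (pselect _) as [ne|ne]; last first.
  by move=> /lt_le_trans/(_ hdel); rewrite ltxx.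
move=> /(inf_lt ne) [e [[e0 _] [x1 [x2 [h1 [h2 h3]]]]] ed].
by exists e, x1, x2; split.
Qed.

Lemma patch_tr_hull (T : Pt) z : hull T (patch_tr T z).
Proof.
move=> e e0; exists z; set e' := Num.min (e / 2) 2^-1.
have e'0 : 0 < e' by rewrite lt_min; apply/andP; split; [exact: divr_gt0 | rewrite invr_gt0].
have e'2 : e' <= 2^-1 by rewrite ge_min lexx orbT.
have e'e : e' < e by rewrite gt_min ltr_pdivrMr // ltr_pMr // ltr1n.
apply: le_lt_trans e'e; apply: (rho_le_tr _ _ 0) => //.
  by rewrite enorm0 ltW.
by rewrite patch_tr0.
Qed.

Lemma hull_approx (T S : Pt) : hull T S -> forall rr : R, 0 < rr ->
  exists z, meet_patch S (eball 0 rr) = meet_patch (patch_tr T z) (eball 0 rr).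
Proof.
move=> hS rr rr0; set X := (d%:R + 1) * (rr + 1).
have X0 : 0 < X by have := ler0n R d; rewrite /X; nra.
set del := Num.min 2^-1 X^-1.
have del0 : 0 < del by rewrite lt_min; apply/andP; rewrite !invr_gt0.
have del2 : del <= 2^-1 by rewrite ge_min lexx.
have [y /rho_lt] := hS del del0.
case/(_ (le_trans del2 (ltW invr2_lt_inv_sqrt2))) => e [x1 [x2 [e0 ed h1 h2 E]]].
exists (y + (x2 - x1)).
have := meet_patch_tr_eq _ _ (- x1) _ E.
rewrite !patch_trD addrN patch_tr0 eball_tr add0r => E'.
apply: (meet_patch_eqS _ _ _ _ _ E').
apply: subset_trans (eball_sub 0 (- x1) _ (ltW rr0)) _ => p /le_trans; apply.
rewrite sub0r opprK; apply: le_trans (_ : X <= _).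
  have : enorm x1 <= 1.
    by rewrite (le_trans h1) // (le_trans (ltW ed)) // (le_trans del2) // invf_le1 // ler1n.
  by have := ler0n R d; rewrite /X; nra.
by rewrite -invf_pge ?posrE // (le_trans (ltW ed)) // ge_min lexx orbT.
Qed.

Lemma hull_orbit_tiles (T S : Pt) t1 t2 p1 p2 : hull T S -> S t1 -> S t2 ->
  supp t1 p1 -> supp t2 p2 -> exists z, patch_tr T z t1 /\ patch_tr T z t2.
Proof.
move=> hS St1 St2 tp1 tp2; set rr := enorm p1 + enorm p2 + 1.
have [n1 n2] := (enorm_ge0 p1, enorm_ge0 p2).
have rr0 : 0 < rr by rewrite /rr; lra.
have [z E] := hull_approx _ _ hS rr rr0.
have orbit t p : S t -> supp t p -> enorm p <= rr -> patch_tr T z t.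
  move=> St tp hp; have : meet_patch S (eball 0 rr) t.
    by split=> //; exists p; split; rewrite //= /eball /= subr0.
  by rewrite E => -[].
by exists z; split; [apply: (orbit _ p1) | apply: (orbit _ p2)]; rewrite // /rr; lra.
Qed.

Lemma hull_tile_diam (T S : Pt) D : (forall t, T t -> coord_diam_le (supp t) D) ->
  hull T S -> forall t, S t -> coord_diam_le (supp t) D.
Proof.
move=> HD hS t St p q tp.
have [z [/patch_trP [s Ts Et] _]] := hull_orbit_tiles _ _ _ _ _ _ hS St St tp tp.
by move: p q tp; rewrite Et; apply/coord_diam_le_set_tr/HD.
Qed.

Lemma hull_tile_interior (T S : Pt) t p : is_patch T -> hull T S -> S t ->
  supp t p -> exists c, interior (supp t) c.
Proof.
move=> pT hS St tp; have [z [Tt _]] := hull_orbit_tiles _ _ _ _ _ _ hS St St tp tp.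
exact: (patch_tr_tile_interior _ _ _ _ pT Tt tp).
Qed.

Lemma hull_tile_eq (T S : Pt) t1 t2 : is_patch T -> hull T S -> S t1 -> S t2 ->
  interior (supp t1) `&` interior (supp t2) !=set0 -> t1 = t2.
Proof.
move=> pT hS St1 St2 [w [w1 w2]].
have [z [Tt1 Tt2]] := hull_orbit_tiles _ _ _ _ _ _ hS St1 St2
  (nbhs_singleton w1) (nbhs_singleton w2).
by apply: (patch_tr_tile_eq _ _ _ _ pT Tt1 Tt2); exists w.
Qed.

Lemma hull_patch_tile (T S P : Pt) t : is_patch T -> hull T S -> is_patch P ->
  P `<=` S -> S t -> supp t !=set0 -> supp t `<=` patch_supp P -> P t.
Proof.
move=> pT hS pP PS St [p tp] tP.
have [c ic] := hull_tile_interior _ _ _ _ pT hS St tp.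
have [t' [Pt' [q [t'q iq]]]] :=
  patch_supp_meet _ _ _ (tP _ (nbhs_singleton ic)) (nbhs_interior ic).
have ct' : closure (interior (supp t')) q by case: (pP.1 _ Pt') => _ ->.
have [w [w1 w2]] := closure_interior_meet _ _ _ ct' iq.
suff <- : t' = t by [].
by apply: (hull_tile_eq _ _ _ _ pT hS (PS _ Pt') St); exists w.
Qed.

End Hull.

Section Ultrafilter.
Context (U : set_system nat) (UU : UltraFilter U).

Lemma ultra_fin_class (I : finType) (g : nat -> I) (B : set nat) : U B ->
  exists i, U (B `&` [set n | g n = i]).
Proof.
move=> UB; apply: contrapT => H.
have H' i : U (~` [set n | g n = i]).
  case: (in_ultra_setVsetC [set n | g n = i] UU) => // Ui.
  by exfalso; apply: H; exists i; apply: filterI.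
have HF : \forall n \near U, forall i, (~` [set n | g n = i]) n.
  exact: filter_forall.
by have [n [_ Hn]] := filter_ex (filterI UB HF); exact: (Hn (g n)).
Qed.

Lemma ultra_lim_cube {R : realType} {d : nat} (s : nat -> 'rV[R]_d) (M : R) :
  U [set n | cube M (s n)] ->
  exists v : 'rV[R]_d, forall e : R, 0 < e ->
    U [set n | forall i, `|s n ord0 i - v ord0 i| < e].
Proof.
move=> UM; have [v [_ clv]] := cube_compact M (s @ U) _ UM.
exists v => e e0; set B := [set n | _].
case: (in_ultra_setVsetC B UU) => // UBc; exfalso.
set A := [set q : 'rV[R]_d | forall i, `|q ord0 i - v ord0 i| < e].
have Nv : nbhs v A by apply/nbhs_coordP; exists e => // q Hq i; rewrite distrC.
by have [q []] := clv (~` A) _ UBc Nv.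
Qed.

Lemma ultra_locally_const {R : realType} {d : nat} (v : nat -> 'rV[R]_d)
    (C : set nat) M r :
  0 < r -> U C -> U [set n | cube M (v n)] ->
  (forall n m, C n -> C m -> (forall i, `|v n ord0 i - v m ord0 i| < r) -> v n = v m) ->
  exists v0, U [set n | v n = v0].
Proof.
move=> r0 UC UM Hv; have [vinf Hinf] := ultra_lim_cube v M UM.
have UD : U (C `&` [set n | forall i, `|v n ord0 i - vinf ord0 i| < r / 2]).
  exact: filterI UC (Hinf _ (divr_gt0 r0 (ltr0Sn _ 1))).
have [n2 Dn2] := filter_ex UD.
exists (v n2); apply: filterS UD => n Dn; apply: Hv Dn.1 Dn2.1 _ => i.
have -> : v n ord0 i - v n2 ord0 i =
    (v n ord0 i - vinf ord0 i) - (v n2 ord0 i - vinf ord0 i) by ring.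
apply: le_lt_trans (ler_normB _ _) _; rewrite [r]splitr.
by apply: ltrD; [exact: Dn.2 | exact: Dn2.2].
Qed.

End Ultrafilter.

Lemma filter_ge (U : set_system nat) : ProperFilter U -> \oo `<=` U ->
  forall A, U A -> forall N, exists2 n, (N <= n)%N & A n.
Proof.
move=> FU Uoo A UA N; have UN : U [set n | (N <= n)%N] by apply: Uoo; exists N.
by have [n [Nn An]] := filter_ex (filterI UN UA); exists n.
Qed.

Section Cluster.
Context {R : realType} {d : nat} {L : finType}.
Local Notation V := 'rV[R]_d.
Local Notation Tl := (@Tile R d L).
Local Notation Pt := (@Patch R d L).

Definition cluster_patch (T : Pt) (z : nat -> V) (S : Pt) :=
  forall rr eta : R, 0 < rr -> 0 < eta -> forall N : nat,
    exists2 n, (N <= n)%N & exists2 x, enorm x <= eta &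
      meet_patch S (eball 0 rr) = meet_patch (patch_tr T (z n + x)) (eball 0 rr).

Lemma cluster_patch_hull (T : Pt) z S : cluster_patch T z S -> hull T S.
Proof.
move=> HS e e0; set e' := Num.min (e / 2) 2^-1.
have e'0 : 0 < e' by rewrite lt_min; apply/andP; split; [exact: divr_gt0 | rewrite invr_gt0].
have ie'0 : 0 < e'^-1 by rewrite invr_gt0.
have [n _ [x hx E]] := HS _ _ ie'0 e'0 0%N.
exists (z n); apply: le_lt_trans (rho_le_tr _ _ x _ e'0 _ hx _) _.
- by rewrite ge_min lexx orbT.
- by rewrite patch_trD.
- by rewrite gt_min ltr_pdivrMr // ltr_pMr // ltr1n.
Qed.

Lemma FLC_patch_tr (T : Pt) : FLC T -> forall K, compact K ->
  exists n (Ps : 'I_n -> Pt), forall z, exists i w,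
    meet_patch (patch_tr T z) K = patch_tr (Ps i) w.
Proof.
move=> hF K cK; have [n [Ps HPs]] := hF K cK; exists n, Ps => z.
have [i [y E]] := HPs (- z); exists i, (y + z).
by rewrite meet_patch_tr E patch_trD.
Qed.

Lemma tile_tr_cube (t : Tl) M K a : supp t `<=` cube M ->
  supp (tile_tr t a) `&` cube K !=set0 -> cube (K + M) a.
Proof.
move=> HM [p [/set_trE tp Kp]].
have -> : a = p + - (p - a) by rewrite opprB addrC subrK.
exact: cubeD Kp (cubeN _ _ (HM _ tp)).
Qed.

Section Compactness.
Variables (T : Pt) (z : nat -> V) (U : set_system nat).
Hypotheses (pT : is_patch T) (hF : FLC T) (UU : UltraFilter U).

Definition window (u : nat -> V) (k n : nat) : Pt :=
  patch_tr (meet_patch (patch_tr T (z n)) (cube (k%:R + 1))) (- u n).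

Lemma ultra_pattern K : compact K -> exists (P : Pt) (w : nat -> V) (A : set nat),
  U A /\ forall n, A n -> meet_patch (patch_tr T (z n)) K = patch_tr P (w n).
Proof.
move=> cK; have [m [Ps HPs]] := FLC_patch_tr T hF K cK.
have H n : exists iw : 'I_m * V,
    meet_patch (patch_tr T (z n)) K = patch_tr (Ps iw.1) iw.2.
  by have [i [w E]] := HPs (z n); exists (i, w).
have [iw Hiw] := choice H.
have [i Ui] := ultra_fin_class U UU _ (fun n => (iw n).1) _ (@filterT _ U _).
exists (Ps i), (fun n => (iw n).2), (setT `&` [set n | (iw n).1 = i]).
by split=> // n [_ /= <-]; exact: Hiw.
Qed.

Lemma anchor : patch_supp T = setT -> exists t (u : nat -> V) (A : set nat),
  [/\ T t, supp t !=set0, U A &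
    forall n, A n -> meet_patch (patch_tr T (z n)) (cube 1) (tile_tr t (u n))].
Proof.
move=> sT; have [P [w [A [UA HA]]]] := ultra_pattern _ (cube_compact 1).
have [n0 An0] := filter_ex UA.
have [t [Tt [q [tq cq]]]] : exists t, T t /\ supp t `&` set_tr (cube 1) (- z n0) !=set0.
  apply: (patch_supp_meet _ (- z n0)); first by rewrite sT.
  apply/(interior_set_tr (cube 1) (- z n0) (- z n0)); rewrite subrr.
  by apply/nbhs_coordP; exists 1 => // q Hq i; have := Hq i; rewrite mxE sub0r normrN => /ltW.
have Pt : P (tile_tr t (z n0 - w n0)).
  have : meet_patch (patch_tr T (z n0)) (cube 1) (tile_tr t (z n0)).
    rewrite meet_patch_tr; apply/patch_trE; rewrite tile_trD subrr tile_tr0.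
    by split=> //; exists q.
  by rewrite HA // => /patch_trE; rewrite tile_trD.
exists t, (fun n => w n + (z n0 - w n0)), A; split=> // [|n An]; first by exists q.
by rewrite HA //; apply/patch_trE; rewrite tile_trD addrAC subrr add0r.
Qed.

Section Anchored.
Variables (t : Tl) (u : nat -> V) (A : set nat).
Hypotheses (Tt : T t) (tne : supp t !=set0) (UA : U A)
  (HA : forall n, A n -> meet_patch (patch_tr T (z n)) (cube 1) (tile_tr t (u n))).

Lemma anchor_bounded : exists M, forall n, A n -> cube M (u n).
Proof.
have [M [_ HM]] := compact_sub_cube _ (pT.1 _ Tt).1.
by exists (1 + M) => n /HA [_]; apply: tile_tr_cube HM.
Qed.

(* Relative to the anchor, the FLC pattern on the cube sits at an offset v n.
   Two offsets closer than the inner radius of t would place two overlapping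
   copies of t in T + z n, so v is locally constant along U, hence
   U-eventually constant. *)
Lemma window_stable (k : nat) : exists Q : Pt, U [set n | window u k n = Q].
Proof.
have [M [_ HM]] := compact_sub_cube _ (pT.1 _ Tt).1.
have [c ic] : exists c, interior (supp t) c.
  by case: tne => p; apply: tile_interior (pT.1 _ Tt).
have [r r0 Hr] := interior_cube _ _ (nbhs_interior ic).
have [P [W [B [UB HB]]]] := ultra_pattern _ (cube_compact (k%:R + 1)).
set C := A `&` B; have UC : U C by exact: filterI.
set v := fun n => W n - u n.
have inP n : C n -> P (tile_tr t (- v n)).
  case=> An Bn; have [Ttn [p [tp cp]]] := HA n An.
  have : meet_patch (patch_tr T (z n)) (cube (k%:R + 1)) (tile_tr t (u n)).
    by split=> //; exists p; split=> //; apply: cubeS cp; rewrite lerDr.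
  by rewrite HB // => /patch_trE; rewrite tile_trD /v opprB.
have inTn n m : C n -> C m -> meet_patch (patch_tr T (z n)) (cube (k%:R + 1))
    (tile_tr t (u n + (v n - v m))).
  move=> Cn Cm; rewrite (HB n Cn.2); apply/patch_trE; rewrite tile_trD.
  rewrite (_ : _ + - W n = - v m); first exact: inP.
  by rewrite /v; apply/matrixP => i j; rewrite !mxE; ring.
have Hv n m : C n -> C m -> (forall i, `|v n ord0 i - v m ord0 i| < r) -> v n = v m.
  move=> Cn Cm Hnm; apply/subr0_eq.
  apply: (patch_tr_tile_tr_rigid _ _ _ _ _ _ _ pT HM ic _ (HA n Cn.1).1 (inTn n m Cn Cm).1).
  by apply: Hr => i; have := Hnm i; rewrite !mxE.
have [Mu HMu] := anchor_bounded.
have [n1 Cn1] := filter_ex UC.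
have UMv : U [set n | cube (k%:R + 1 + M + (`|v n1| + Mu)) (v n)].
  apply: filterS UC => n Cn /=.
  have -> : v n = (W n - v n1) + (v n1 - u n).
    by rewrite /v; apply/matrixP => i j; rewrite !mxE; ring.
  apply: cubeD; last exact: cubeD (cube_mx_norm _) (cubeN _ _ (HMu _ Cn.1)).
  have [_] := inTn n n1 Cn Cn1.
  rewrite (_ : u n + _ = W n - v n1); first exact: tile_tr_cube HM.
  by rewrite /v; apply/matrixP => i j; rewrite !mxE; ring.
have [v0 Uv0] := ultra_locally_const U UU v C _ _ r0 UC UMv Hv.
exists (patch_tr P v0); apply: filterS (filterI UC Uv0) => n [[_ Bn] vn] /=.
by rewrite /window HB // patch_trD -vn.
Qed.

End Anchored.

Section Limit.
Variables (u : nat -> V) (Q : nat -> Pt) (uinf : V).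
Hypotheses
  (HQ : forall k : nat, U [set n | window u k n = Q k])
  (Hu : forall e : R, 0 < e -> U [set n | forall i, `|u n ord0 i - uinf ord0 i| < e]).

Lemma window_ball_sub (k : nat) rr n : rr <= k%:R ->
  (forall i, `|u n ord0 i - uinf ord0 i| < 1) ->
  eball (- uinf) rr `<=` set_tr (cube (k%:R + 1)) (- u n).
Proof.
move=> rrk Hn p /eball_coord Hp; apply/set_trE => i.
have := Hp i; have := Hn i; rewrite !mxE => h1 h2.
have -> : p ord0 i - - u n ord0 i =
    (p ord0 i - - uinf ord0 i) + (u n ord0 i - uinf ord0 i) by ring.
by apply: le_trans (ler_normD _ _) _; apply: lerD; [exact: le_trans h2 rrk | exact: ltW].
Qed.

Lemma meet_window (k : nat) rr n : rr <= k%:R ->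
  window u k n = Q k -> (forall i, `|u n ord0 i - uinf ord0 i| < 1) ->
  meet_patch (patch_tr (patch_tr T (z n)) (- u n)) (eball (- uinf) rr) =
  meet_patch (Q k) (eball (- uinf) rr).
Proof.
move=> rrk En Hn; rewrite -En /window -meet_patch_tr_set_tr meet_patchS //.
exact: window_ball_sub.
Qed.

Lemma meet_window_union (k : nat) rr : rr <= k%:R ->
  meet_patch [set s | exists m, Q m s] (eball (- uinf) rr) =
  meet_patch (Q k) (eball (- uinf) rr).
Proof.
move=> rrk; apply/seteqP; split=> s [Ss ne]; last by split=> //; exists k.
case: Ss => m Qms.
have [n [[Em Ek] Hn]] := filter_ex (filterI (filterI (HQ m) (HQ k)) (Hu _ ltr01)).
rewrite -(meet_window _ _ n rrk Ek Hn); split=> //.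
by move: Qms; rewrite -Em /window => /patch_trE [Ts _]; apply/patch_trE.
Qed.

Lemma cluster_windows : \oo `<=` U ->
  cluster_patch T z (patch_tr [set s | exists m, Q m s] uinf).
Proof.
move=> Uoo rr eta rr0 eta0 N; set k := Num.Def.archi_bound rr.
have rrk : rr <= k%:R := ltW (archi_boundP (ltW rr0)).
have d1 : 0 < d%:R + 1 :> R by rewrite ltr_wpDl.
set e := Num.min 1 (eta / (d%:R + 1)).
have e0 : 0 < e by rewrite lt_min ltr01 divr_gt0.
have UG : U ([set n | window u k n = Q k] `&`
    [set n | forall i, `|u n ord0 i - uinf ord0 i| < e]).
  exact: filterI (HQ k) (Hu _ e0).
have [n Nn [Ek Hn]] := filter_ge U _ Uoo _ UG N.
have Hn1 i : `|u n ord0 i - uinf ord0 i| < 1.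
  by apply: lt_le_trans (Hn i) _; rewrite ge_min lexx.
exists n => //; exists (- u n + uinf).
  apply: le_trans (enorm_le_coord _ (eta / (d%:R + 1)) _ _) _.
  - exact: divr_ge0 (ltW eta0) (ltW d1).
  - move=> i; rewrite !mxE addrC distrC; apply: ltW; apply: lt_le_trans (Hn i) _.
    by rewrite ge_min lexx orbT.
  - by rewrite mulrCA ger_pMr // ler_pdivrMr // mul1r lerDl.
have := meet_window k rr n rrk Ek Hn1; rewrite -(meet_window_union k rr rrk) => E.
have := meet_patch_tr_eq _ _ uinf _ E; rewrite eball_tr addNr !patch_trD.
by move=> <-.
Qed.

End Limit.
End Compactness.

Lemma exists_cluster_patch (T : Pt) z : is_tiling T -> FLC T ->
  exists S, cluster_patch T z S.
Proof.
move=> [pT sT] hF.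
have [U [UU Uoo]] : exists U : set_system nat, UltraFilter U /\ \oo `<=` U.
  exact: ultraFilterLemma.
have [t [u [A [Tt tne UA HA]]]] := anchor T z U hF UU sT.
have [Q HQ] := choice (window_stable T z U pT hF UU t u A Tt tne UA HA).
have [Mu HMu] := anchor_bounded T z pT t u A Tt HA.
have [uinf Hu] := ultra_lim_cube U UU u Mu (filterS HMu UA).
exists (patch_tr [set s | exists m, Q m s] uinf).
exact: (cluster_windows T z U UU u Q uinf HQ Hu Uoo).
Qed.

End Cluster.

Section Eigen.
Context {R : realType} {d : nat} {L : finType}.
Local Notation V := 'rV[R]_d.
Local Notation Pt := (@Patch R d L).

Lemma normC_sub_lt_trans (u v w : R[i]) (e1 e2 : R) :
  `|u - w| < e1%:C -> `|w - v| < e2%:C -> `|u - v| < (e1 + e2)%:C.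
Proof.
move=> h1 h2; rewrite -(subrKA w) rmorphD.
exact: le_lt_trans (ler_normD _ _) (ltrD h1 h2).
Qed.

Lemma eigen_dist_tr (T : Pt) f a z1 z2 (x : V) : is_eigenfunction T f a ->
  `|f (patch_tr T (z1 - x)) - f (patch_tr T (z2 - x))| =
  `|f (patch_tr T z1) - f (patch_tr T z2)|.
Proof.
case=> _ f1 fe.
have E z : f (patch_tr T (z - x)) = expi (dotp x a) * f (patch_tr T z).
  by rewrite -fe ?patch_trD //; exact: patch_tr_hull.
have n1 : `|expi (dotp x a)| = 1.
  have := f1 _ (patch_tr_hull T (z1 - x)).
  by rewrite E normrM f1 ?mulr1 //; exact: patch_tr_hull.
by rewrite !E -mulrBr normrM n1 mul1r.
Qed.

Lemma hull_orbit_close (T S : Pt) f : continuous_on_hull T f -> hull T S ->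
  forall eps rr : R, 0 < eps -> 0 < rr -> exists z,
    meet_patch S (eball 0 rr) = meet_patch (patch_tr T z) (eball 0 rr) /\
    `|f S - f (patch_tr T z)| < eps%:C.
Proof.
move=> fc hS eps rr eps0 rr0; have [del del0 Hdel] := fc S hS eps eps0.
set e := Num.min (Num.min (del / 2) 2^-1) rr^-1.
have e0 : 0 < e by rewrite !lt_min divr_gt0 // !invr_gt0 rr0 ltr0n.
have ie0 : 0 < e^-1 by rewrite invr_gt0.
have [z E] := hull_approx _ _ hS _ ie0.
exists z; split.
  apply: (meet_patch_eqS _ _ _ _ _ E) => p /le_trans; apply.
  by rewrite -invf_pge ?posrE // ge_min lexx orbT.
apply: Hdel (patch_tr_hull T z) _.
apply: le_lt_trans (rho_le_tr _ _ 0 _ e0 _ _ _) _.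
- by rewrite !ge_min lexx !orbT.
- by rewrite enorm0 ltW.
- by rewrite patch_tr0.
- by rewrite !gt_min ltr_pdivrMr // ltr_pMr // ltr1n.
Qed.

Lemma orbit_meet_close_seq (T : Pt) f : is_tiling T -> FLC T ->
  continuous_on_hull T f -> forall eps : R, 0 < eps -> forall y1 y2 : nat -> V,
  (forall n, meet_patch (patch_tr T (y1 n)) (eball 0 (n%:R + 1)) =
             meet_patch (patch_tr T (y2 n)) (eball 0 (n%:R + 1))) ->
  exists n, `|f (patch_tr T (y1 n)) - f (patch_tr T (y2 n))| < eps%:C.
Proof.
move=> hT hF fc eps eps0 y1 y2 Ey.
have [S HS] := exists_cluster_patch T y1 hT hF.
have [del del0 Hdel] := fc S (cluster_patch_hull _ _ _ HS) _ (divr_gt0 eps0 (ltr0Sn _ 1)).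
set e := Num.min (del / 2) 2^-1.
have e0 : 0 < e by rewrite lt_min; apply/andP; split; [exact: divr_gt0 | rewrite invr_gt0].
have ed : e < del by rewrite gt_min ltr_pdivrMr // ltr_pMr // ltr1n.
have e2 : e <= 2^-1 by rewrite ge_min lexx orbT.
have ie0 : 0 < e^-1 by rewrite invr_gt0.
set N := Num.Def.archi_bound (d%:R * (e^-1 + 1)).
have hN : d%:R * (e^-1 + 1) < N%:R.
  by apply: archi_boundP; rewrite mulr_ge0 // addr_ge0 // ltW.
have [n Nn [x hx E1]] := HS _ _ ie0 e0 N.
have E2 : meet_patch (patch_tr T (y1 n + x)) (eball 0 e^-1) =
    meet_patch (patch_tr T (y2 n + x)) (eball 0 e^-1).
  have := meet_patch_tr_eq _ _ x _ (Ey n); rewrite eball_tr add0r !patch_trD.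
  apply: meet_patch_eqS; apply: subset_trans (eball_sub 0 x _ (ltW ie0)) _.
  move=> p /le_trans; apply; rewrite sub0r enormN.
  have x1 : enorm x <= 1 by rewrite (le_trans hx) // (le_trans e2) // invf_le1 // ler1n.
  apply: le_trans (_ : d%:R * (e^-1 + 1) <= _); first by rewrite ler_wpM2l // lerD2l.
  by rewrite (le_trans (ltW hN)) // (le_trans (_ : N%:R <= n%:R)) ?ler_nat // lerDl.
have close (y : V) : meet_patch S (eball 0 e^-1) =
    meet_patch (patch_tr (patch_tr T y) x) (eball 0 e^-1) ->
    `|f S - f (patch_tr T y)| < (eps / 2)%:C.
  move=> Ey'; apply: Hdel (patch_tr_hull T y) _.
  exact: le_lt_trans (rho_le_tr _ _ _ _ e0 e2 hx Ey') ed.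
exists n; rewrite [eps]splitr; apply: (normC_sub_lt_trans _ _ (f S)).
  by rewrite distrC; apply: close; rewrite patch_trD.
by apply: close; rewrite patch_trD -E2.
Qed.

End Eigen.

Section Local.
Context {R : realType} {d : nat} {L : finType}.
Local Notation V := 'rV[R]_d.
Local Notation Pt := (@Patch R d L).

Lemma orbit_meet_close (T : Pt) f a : is_tiling T -> FLC T -> is_eigenfunction T f a ->
  forall eps : R, 0 < eps -> exists2 r : R, 0 < r & forall z1 z2 x : V,
    meet_patch (patch_tr T z1) (eball x r) = meet_patch (patch_tr T z2) (eball x r) ->
    `|f (patch_tr T z1) - f (patch_tr T z2)| < eps%:C.
Proof.
move=> hT hF hE eps eps0; apply: contrapT => H.
have bad n : exists zx : V * V * V,
    meet_patch (patch_tr T zx.1.1) (eball zx.2 (n%:R + 1)) =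
    meet_patch (patch_tr T zx.1.2) (eball zx.2 (n%:R + 1)) /\
    ~ `|f (patch_tr T zx.1.1) - f (patch_tr T zx.1.2)| < eps%:C.
  apply: contrapT => Hn; apply: H; exists (n%:R + 1); first by rewrite ltr_wpDl.
  by move=> z1 z2 x E; apply: contrapT => ne; apply: Hn; exists (z1, z2, x).
have [zx Hzx] := choice bad.
have [fc _ _] := hE.
have [|n] := orbit_meet_close_seq T f hT hF fc _ eps0
  (fun n => (zx n).1.1 - (zx n).2) (fun n => (zx n).1.2 - (zx n).2).
  move=> n; have := meet_patch_tr_eq _ _ (- (zx n).2) _ (Hzx n).1.
  by rewrite !patch_trD eball_tr subrr.
by rewrite (eigen_dist_tr _ _ _ _ _ _ hE); case: (Hzx n).
Qed.

Lemma hull_meet_close (T : Pt) f a : is_tiling T -> FLC T -> is_eigenfunction T f a ->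
  forall eps : R, 0 < eps -> exists2 r : R, 0 < r & forall (S1 S2 : Pt) (x : V),
    hull T S1 -> hull T S2 ->
    meet_patch S1 (eball x r) = meet_patch S2 (eball x r) -> `|f S1 - f S2| < eps%:C.
Proof.
move=> hT hF hE eps eps0; have [fc _ _] := hE.
have e3 : 0 < eps / 3 by rewrite divr_gt0.
have [r r0 Hr] := orbit_meet_close T f a hT hF hE _ e3.
exists r => // S1 S2 x h1 h2 E; set rr := d%:R * (r + enorm x) + 1.
have rr0 : 0 < rr by rewrite ltr_wpDl // mulr_ge0 // addr_ge0 ?enorm_ge0 // ltW.
have sub : eball x r `<=` eball 0 rr.
  apply: subset_trans (eball_sub x 0 _ (ltW r0)) _ => p /le_trans; apply.
  by rewrite subr0 lerDl.
have [z1 [E1 g1]] := hull_orbit_close T S1 f fc h1 _ _ e3 rr0.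
have [z2 [E2 g2]] := hull_orbit_close T S2 f fc h2 _ _ e3 rr0.
have g12 : `|f (patch_tr T z1) - f (patch_tr T z2)| < (eps / 3)%:C.
  apply: (Hr _ _ x); rewrite -(meet_patch_eqS _ _ _ _ sub E1).
  by rewrite -(meet_patch_eqS _ _ _ _ sub E2).
rewrite (_ : eps = eps / 3 + (eps / 3 + eps / 3)); last by field.
apply: normC_sub_lt_trans g1 (normC_sub_lt_trans _ _ _ _ _ g12 _).
by rewrite distrC.
Qed.

Lemma meet_patch_eball_sub (S1 S2 : Pt) (x : V) r D r' : 0 <= r -> 0 <= D ->
  d%:R * (r + D) <= r' -> (forall t, S1 t -> coord_diam_le (supp t) D) ->
  (forall t, S1 t -> supp t !=set0 -> supp t `<=` eball x r' -> S2 t) ->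
  meet_patch S1 (eball x r) `<=` meet_patch S2 (eball x r).
Proof.
move=> r0 D0 rr' HD H12 t [S1t [p [tp Bp]]]; split; last by exists p.
apply: H12 => //; first by exists p.
have ne : supp t `&` eball x r !=set0 by exists p.
by move=> q /(coord_diam_le_sub_eball _ _ _ _ D0 r0 (HD _ S1t) ne) /le_trans; apply.
Qed.

Lemma eigen_local (T : Pt) f a : is_tiling T -> FLC T -> is_eigenfunction T f a ->
  forall eps : R, 0 < eps -> exists2 r0 : R, 0 < r0 &
    forall (S1 S2 : Pt) (x : V) (r : R), r0 <= r -> hull T S1 -> hull T S2 ->
    (forall t, S1 t -> supp t !=set0 -> supp t `<=` eball x r -> S2 t) ->
    (forall t, S2 t -> supp t !=set0 -> supp t `<=` eball x r -> S1 t) ->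
    `|f S1 - f S2| < eps%:C.
Proof.
move=> hT hF hE eps eps0.
have [rk rk0 Hk] := hull_meet_close T f a hT hF hE _ eps0.
have [D [D0 HD]] := FLC_tile_diam T hT.1 hF.
exists (d%:R * (rk + D) + 1) => [|S1 S2 x r r0r h1 h2 H12 H21].
  by rewrite ltr_wpDl // mulr_ge0 // addr_ge0 // ltW.
have rkD : d%:R * (rk + D) <= r by apply: le_trans r0r; rewrite lerDl.
apply: (Hk S1 S2 x h1 h2); apply/seteqP; split;
  apply: (meet_patch_eball_sub _ _ _ _ _ _ (ltW rk0) D0 rkD) => //;
  exact: hull_tile_diam HD _.
Qed.

End Local.

Theorem lemma3p4 (R : realType) (d : nat) (L : finType)
    (T : @Patch R d L) (f : @Patch R d L -> R[i]) (a : 'rV[R]_d) :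
  is_tiling T -> FLC T -> is_eigenfunction T f a ->
  (forall eps : R, 0 < eps ->
     exists2 r : R, 0 < r &
       forall (S1 S2 : @Patch R d L) (x : 'rV[R]_d),
         hull T S1 -> hull T S2 ->
         inside_patch S1 (eball x r) = inside_patch S2 (eball x r) ->
         `|f S1 - f S2| < eps%:C)
  /\
  (forall eps : R, 0 < eps ->
     exists2 r0 : R, 0 < r0 &
       forall (r : R) (P : @Patch R d L), r0 <= r -> is_patch P ->
         (exists x : 'rV[R]_d, eball x r `<=` patch_supp P) ->
         (* diam f(A_P) < eps *)
         exists2 del : R, del < eps &
           forall S1 S2, A_patch T P S1 -> A_patch T P S2 ->
             `|f S1 - f S2| <= del%:C).
Proof.
move=> hT hF hE; split=> eps eps0.
  have [r r0 Hr] := eigen_local T f a hT hF hE _ eps0.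
  exists r => // S1 S2 x h1 h2 E; apply: (Hr S1 S2 x r (lexx r) h1 h2).
    by move=> t S1t _ tB; have : inside_patch S1 (eball x r) t by []; rewrite E => -[].
  by move=> t S2t _ tB; have : inside_patch S2 (eball x r) t by []; rewrite -E => -[].
have e2 : 0 < eps / 2 by rewrite divr_gt0.
have [r0 r00 Hr] := eigen_local T f a hT hF hE _ e2.
exists r0 => // r P r0r pP [x Hx]; exists (eps / 2).
  by rewrite ltr_pdivrMr // ltr_pMr // ltr1n.
move=> S1 S2 [h1 PS1] [h2 PS2]; apply/ltW/(Hr S1 S2 x r r0r h1 h2).
  move=> t S1t ne tB; apply: PS2.
  exact: hull_patch_tile T S1 P t hT.1 h1 pP PS1 S1t ne (subset_trans tB Hx).
move=> t S2t ne tB; apply: PS1.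
exact: hull_patch_tile T S2 P t hT.1 h2 pP PS2 S2t ne (subset_trans tB Hx).
Qed.
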